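(* There exists $n \geq 1$ such that the set of PC prographs of size $n$, ordered by $P \leq Q$ if $Q$ can be obtained from $P$ by a finite (possibly empty) sequence of the four rotations, is a poset that is not a lattice.
   Context: A PC prograph of size $n$ is a finite connected directed acyclic graph embedded in the plane (up to isotopy), drawn so that all edges go upward, whose $2n$ vertices are $n$ coproducts (one incoming edge, two outgoing edges distinguished as left and right) and $n$ products (two incoming edges distinguished as left and right, one outgoing edge); exactly one coproduct has its incoming slot unconnected (global input, at the bottom) and exactly one product has its outgoing slot unconnected (global output, at the top); all other slots are joined by edges. The four rotations are local rewritings of a configuration of two adjacent operators; in each, the boundary edges of the configuration, ordered left to right among inputs and among outputs, are reattached in the same order. Writing $\mu$ for a product, $\Delta$ for a coproduct, and composing configurations from bottom to top as in string diagrams: (1) $(\mathrm{id}\otimes\Delta)\circ\Delta \to (\Delta\otimes\mathrm{id})\circ\Delta$ (a coproduct on the right output of a coproduct becomes a coproduct on the left output of a coproduct); (2) $\mu\circ(\mu\otimes\mathrm{id}) \to \mu\circ(\mathrm{id}\otimes\mu)$; (3) $(\mu\otimes\mathrm{id})\circ(\mathrm{id}\otimes\Delta) \to \Delta\circ\mu$ (a coproduct whose left output enters the right input of a product, with two inputs and two outputs, becomes a product whose output enters a coproduct); (4) $\Delta\circ\mu \to (\mathrm{id}\otimes\mu)\circ(\Delta\otimes\mathrm{id})$ (a product whose output enters a coproduct becomes a coproduct whose right output enters the left input of a product). *)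

(* PC prographs encoded as progressive string diagrams:
   sequences of "layers" id_a (x) g (x) id_b (g = product or coproduct),
   read bottom to top, modulo the interchange law (= planar isotopy,
   Joyal--Street). *)
From Stdlib Require Import List Arith Relations.
Import ListNotations.

Inductive op : Type := Mu | Delta .

Definition ar_in (g : op) : nat := match g with Mu => 2 | Delta => 1 end.
Definition ar_out (g : op) : nat := match g with Mu => 1 | Delta => 2 end.

(* a layer (a, g, b) denotes id_a (x) g (x) id_b *)
Definition layer : Type := (nat * op * nat)%type.
Definition lop (l : layer) : op := snd (fst l).
Definition in_w (l : layer) : nat := fst (fst l) + ar_in (lop l) + snd l.
Definition out_w (l : layer) : nat := fst (fst l) + ar_out (lop l) + snd l.

Definition diagram : Type := list layer.

Fixpoint typed (w : nat) (D : diagram) (w' : nat) : Prop :=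
  match D with
  | [] => w = w'
  | l :: D' => in_w l = w /\ typed (out_w l) D' w'
  end.

Definition nb_op (g : op) (D : diagram) : nat :=
  length (filter (fun l => match lop l, g with
                           | Mu, Mu | Delta, Delta => true
                           | _, _ => false end) D).

(* PC prograph of size n: a 1 -> 1 diagram with n products and n coproducts
   (connectedness, unique global input/output follow automatically). *)
Definition prograph (n : nat) (D : diagram) : Prop :=
  typed 1 D 1 /\ nb_op Mu D = n /\ nb_op Delta D = n.

Definition in_context (R : list layer -> list layer -> Prop) : diagram -> diagram -> Prop :=
  fun D D' => exists pre post x y, R x y /\ D = pre ++ x ++ post /\ D' = pre ++ y ++ post.

(* interchange law: id_a (x) g1 (x) id_c (x) g2 (x) id_b computed in two orders *)
Definition interchange (x y : list layer) : Prop :=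
  exists a c b g1 g2,
    x = [(a, g1, c + ar_in g2 + b); (a + ar_out g1 + c, g2, b)] /\
    y = [(a + ar_in g1 + c, g2, b); (a, g1, c + ar_out g2 + b)].

Definition iso_step (D D' : diagram) : Prop :=
  in_context interchange D D' \/ in_context interchange D' D.

Definition isotopic : diagram -> diagram -> Prop := clos_refl_trans _ iso_step.

(* the four rotations, bottom layer first *)
Definition rotation (x y : list layer) : Prop :=
  exists a b,
    (* (1) (id (x) D) o D  ->  (D (x) id) o D *)
    (x = [(a, Delta, b); (a + 1, Delta, b)] /\ y = [(a, Delta, b); (a, Delta, b + 1)])
    (* (2) mu o (mu (x) id)  ->  mu o (id (x) mu) *)
 \/ (x = [(a, Mu, b + 1); (a, Mu, b)] /\ y = [(a + 1, Mu, b); (a, Mu, b)])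
    (* (3) (mu (x) id) o (id (x) D)  ->  D o mu *)
 \/ (x = [(a + 1, Delta, b); (a, Mu, b + 1)] /\ y = [(a, Mu, b); (a, Delta, b)])
    (* (4) D o mu  ->  (id (x) mu) o (D (x) id) *)
 \/ (x = [(a, Mu, b); (a, Delta, b)] /\ y = [(a, Delta, b + 1); (a + 1, Mu, b)]).

Definition prle : diagram -> diagram -> Prop :=
  clos_refl_trans _ (fun D D' => iso_step D D' \/ in_context rotation D D').

Definition is_join (n : nat) (P Q J : diagram) : Prop :=
  prograph n J /\ prle P J /\ prle Q J /\
  (forall U, prograph n U -> prle P U -> prle Q U -> prle J U).

Definition is_meet (n : nat) (P Q M : diagram) : Prop :=
  prograph n M /\ prle M P /\ prle M Q /\
  (forall L, prograph n L -> prle L P -> prle L Q -> prle L M).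

Definition is_poset_n (n : nat) : Prop :=
  forall P Q, prograph n P -> prograph n Q -> prle P Q -> prle Q P -> isotopic P Q.

Definition is_lattice_n (n : nat) : Prop :=
  forall P Q, prograph n P -> prograph n Q ->
    (exists J, is_join n P Q J) /\ (exists M, is_meet n P Q M).

From Stdlib Require Import List Arith Bool Relations Lia.
Import ListNotations.

(* For n = 3 there are only 61 diagrams 1 -> 1 with six layers, so the
   order can be decided by a certificate: to every diagram D we attach a finite
   list [upset D] (computed by exploring all moves from D) such that D lies in
   its own upset, an interchange never enlarges the upset, and a rotation D -> D'
   yields an upset not containing D.  Upsets then shrink along every chain of
   moves, strictly at each rotation, so a chain from P back to P contains
   interchanges only: the order is antisymmetric.  For the failure of the
   lattice property, the prographs [p1] and [p2] below have the two upper bounds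
   [u1] and [u2], but no upper bound of [p1] and [p2] lies below both. *)

Definition layer_eq_dec (l l' : layer) : {l = l'} + {l <> l'}.
Proof. repeat decide equality. Defined.

Definition diagram_eq_dec : forall D D' : diagram, {D = D'} + {D <> D'} :=
  list_eq_dec layer_eq_dec.

Definition memb (D : diagram) (S : list diagram) : bool :=
  if in_dec diagram_eq_dec D S then true else false.

Lemma memb_true_iff D S : memb D S = true <-> In D S.
Proof. unfold memb; destruct (in_dec diagram_eq_dec D S); split; easy. Qed.

Definition subsetb (S T : list diagram) : bool := forallb (fun D => memb D T) S.

Lemma subsetb_incl S T : subsetb S T = true -> incl S T.
Proof.
  intros H D HD; apply memb_true_iff.
  exact (proj1 (forallb_forall _ S) H D HD).
Qed.

Lemma filter_length_incl {A} (f g : A -> bool) (l : list A) :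
  (forall x, In x l -> f x = true -> g x = true) ->
  length (filter f l) <= length (filter g l).
Proof.
  induction l as [|a l IH]; intros Hfg; simpl; [lia|].
  assert (IH' : length (filter f l) <= length (filter g l)) by (apply IH; auto with datatypes).
  specialize (Hfg a (or_introl eq_refl)).
  destruct (f a), (g a); simpl; try lia; discriminate (Hfg eq_refl).
Qed.

Lemma filter_length_incl_strict {A} (f g : A -> bool) (l : list A) x :
  (forall y, In y l -> f y = true -> g y = true) ->
  In x l -> f x = false -> g x = true ->
  length (filter f l) < length (filter g l).
Proof.
  induction l as [|a l IH]; intros Hfg Hx Hfx Hgx; [destruct Hx|].
  simpl; destruct Hx as [<- | Hx].
  - rewrite Hfx, Hgx; simpl.
    enough (length (filter f l) <= length (filter g l)) by lia.
    apply filter_length_incl; auto with datatypes.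
  - assert (IH' : length (filter f l) < length (filter g l))
      by (apply IH; auto with datatypes).
    specialize (Hfg a (or_introl eq_refl)).
    destruct (f a), (g a); simpl; try lia; discriminate (Hfg eq_refl).
Qed.

Fixpoint diagrams (k w : nat) : list diagram :=
  match k with
  | 0 => if w =? 1 then [[]] else []
  | S k => flat_map (fun a => map (cons (a, Delta, w - 1 - a)) (diagrams k (w + 1))) (seq 0 w)
        ++ flat_map (fun a => map (cons (a, Mu, w - 2 - a)) (diagrams k (w - 1))) (seq 0 (w - 1))
  end.

Lemma typed_in_diagrams D w : typed w D 1 -> In D (diagrams (length D) w).
Proof.
  revert w; induction D as [|[[a g] b] D IH]; intros w HD.
  - simpl in HD; subst; now left.
  - destruct HD as [Hw HD]; unfold in_w, out_w, lop in *; simpl length; cbn [diagrams].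
    apply in_or_app; destruct g; cbn [ar_in ar_out fst snd] in *;
      [right | left]; apply in_flat_map;
      exists a; (split; [apply in_seq; lia | apply in_map_iff; exists D]).
    + replace (w - 2 - a) with b by lia; replace (w - 1) with (a + 1 + b) by lia; auto.
    + replace (w - 1 - a) with b by lia; replace (w + 1) with (a + 2 + b) by lia; auto.
Qed.

Lemma nb_op_Mu_Delta D : nb_op Mu D + nb_op Delta D = length D.
Proof.
  induction D as [|l D IH]; simpl; auto.
  unfold nb_op in *; simpl; destruct (lop l); simpl; lia.
Qed.

Lemma prograph_in_diagrams n D : prograph n D -> In D (diagrams (2 * n) 1).
Proof.
  intros (Htyped & HMu & HDelta).
  replace (2 * n) with (length D) by (rewrite <- nb_op_Mu_Delta; lia).
  now apply typed_in_diagrams.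
Qed.

Fixpoint rewrites (f : layer -> layer -> list (list layer)) (D : diagram) : list diagram :=
  match D with
  | l1 :: D' =>
      match D' with l2 :: r => map (fun y => y ++ r) (f l1 l2) | [] => [] end
      ++ map (cons l1) (rewrites f D')
  | [] => []
  end.

Lemma in_context_rewrites (R : list layer -> list layer -> Prop) f D D' :
  (forall x y, R x y -> exists l1 l2, x = [l1; l2] /\ In y (f l1 l2)) ->
  in_context R D D' -> In D' (rewrites f D).
Proof.
  intros Hf (pre & post & x & y & Hxy & -> & ->).
  destruct (Hf _ _ Hxy) as (l1 & l2 & -> & Hy).
  induction pre as [|l pre IH]; simpl; apply in_or_app.
  - left; apply in_map_iff; eauto.
  - right; now apply in_map.
Qed.

Definition interchanges (l1 l2 : layer) : list (list layer) :=
  let '(a, g1, r) := l1 in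
  let '(a', g2, b) := l2 in
  let c := a' - a - ar_out g1 in
  if (a + ar_out g1 <=? a') && (r =? c + ar_in g2 + b)
  then [[(a + ar_in g1 + c, g2, b); (a, g1, c + ar_out g2 + b)]] else [].

Definition interchanges_rev (l1 l2 : layer) : list (list layer) :=
  let '(a', g2, b) := l1 in
  let '(a, g1, r) := l2 in
  let c := a' - a - ar_in g1 in
  if (a + ar_in g1 <=? a') && (r =? c + ar_out g2 + b)
  then [[(a, g1, c + ar_in g2 + b); (a + ar_out g1 + c, g2, b)]] else [].

Definition rotations (l1 l2 : layer) : list (list layer) :=
  let '(a, g, b) := l1 in
  let '(a', g', b') := l2 in
  match g, g' with
  | Delta, Delta =>
      if (a' =? a + 1) && (b' =? b) then [[(a, Delta, b); (a, Delta, b + 1)]] else []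
  | Mu, Mu =>
      if (a' =? a) && (b =? b' + 1) then [[(a + 1, Mu, b'); (a, Mu, b')]] else []
  | Delta, Mu =>
      if (a =? a' + 1) && (b' =? b + 1) then [[(a', Mu, b); (a', Delta, b)]] else []
  | Mu, Delta =>
      if (a' =? a) && (b' =? b) then [[(a, Delta, b + 1); (a + 1, Mu, b)]] else []
  end.

Ltac decide_guards :=
  repeat match goal with
  | |- context [?x =? ?y] => replace (x =? y) with true by (symmetry; apply Nat.eqb_eq; lia)
  | |- context [?x <=? ?y] => replace (x <=? y) with true by (symmetry; apply Nat.leb_le; lia)
  end.

Lemma interchanges_complete x y :
  interchange x y -> exists l1 l2, x = [l1; l2] /\ In y (interchanges l1 l2).
Proof.
  intros (a & c & b & g1 & g2 & -> & ->); do 2 eexists; split; [reflexivity|]; cbn.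
  replace (a + ar_out g1 + c - a - ar_out g1) with c by lia.
  decide_guards; now left.
Qed.

Lemma interchanges_rev_complete x y :
  interchange y x -> exists l1 l2, x = [l1; l2] /\ In y (interchanges_rev l1 l2).
Proof.
  intros (a & c & b & g1 & g2 & -> & ->); do 2 eexists; split; [reflexivity|]; cbn.
  replace (a + ar_in g1 + c - a - ar_in g1) with c by lia.
  decide_guards; now left.
Qed.

Lemma rotations_complete x y :
  rotation x y -> exists l1 l2, x = [l1; l2] /\ In y (rotations l1 l2).
Proof.
  intros (a & b & [[-> ->] | [[-> ->] | [[-> ->] | [-> ->]]]]);
    do 2 eexists; split; try reflexivity;
    cbv beta iota delta [rotations]; rewrite !Nat.eqb_refl; now left.
Qed.

Definition iso_succ (D : diagram) : list diagram :=
  rewrites interchanges D ++ rewrites interchanges_rev D.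

Definition rot_succ (D : diagram) : list diagram := rewrites rotations D.

Lemma iso_step_in_iso_succ D D' : iso_step D D' -> In D' (iso_succ D).
Proof.
  intros [H | (pre & post & x & y & Hxy & -> & ->)]; apply in_or_app.
  - left; exact (in_context_rewrites _ _ _ _ interchanges_complete H).
  - right; apply (in_context_rewrites (fun x y => interchange y x) _ _ _
                   interchanges_rev_complete).
    now exists pre, post, y, x.
Qed.

Lemma rotation_in_rot_succ D D' : in_context rotation D D' -> In D' (rot_succ D).
Proof. exact (in_context_rewrites _ _ _ _ rotations_complete). Qed.

Section UpsetCertificate.

Variables (U : list diagram) (up : diagram -> list diagram).

Hypothesis up_refl : forall D, In D U -> In D (up D).
Hypothesis up_iso_step : forall D D', In D U -> iso_step D D' ->
  In D' U /\ incl (up D') (up D).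
Hypothesis up_rotation : forall D D', In D U -> in_context rotation D D' ->
  In D' U /\ incl (up D') (up D) /\ ~ In D (up D').

Definition up_size (D : diagram) : nat := length (filter (fun E => memb E (up D)) U).

Lemma up_size_incl D D' : incl (up D') (up D) -> up_size D' <= up_size D.
Proof.
  intros Hincl; apply filter_length_incl; intros E _ HE.
  apply memb_true_iff, Hincl, memb_true_iff, HE.
Qed.

Lemma up_size_rotation D D' : In D U -> in_context rotation D D' -> up_size D' < up_size D.
Proof.
  intros HD Hrot; destruct (up_rotation D D' HD Hrot) as (_ & Hincl & Hnot).
  apply filter_length_incl_strict with D; auto.
  - intros E _ HE; apply memb_true_iff, Hincl, memb_true_iff, HE.
  - destruct (memb D (up D')) eqn:E; [now apply memb_true_iff in E|reflexivity].
  - now apply memb_true_iff, up_refl.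
Qed.

Lemma prle_up_invariant A B : prle A B -> In A U ->
  In B U /\ incl (up B) (up A) /\ (up_size B = up_size A -> isotopic A B).
Proof.
  intros H; apply clos_rt_rt1n in H.
  induction H as [A | A A1 B [Hiso | Hrot] _ IH]; intros HA.
  - split; [exact HA | split; [apply incl_refl | intros _; apply rt_refl]].
  - destruct (up_iso_step A A1 HA Hiso) as [HA1 Hincl].
    destruct (IH HA1) as (HB & HincB & Hsize).
    pose proof (up_size_incl _ _ Hincl); pose proof (up_size_incl _ _ HincB).
    repeat split; [exact HB | now apply incl_tran with (up A1) |].
    intros Heq; apply rt_trans with A1; [now apply rt_step | apply Hsize; lia].
  - destruct (up_rotation A A1 HA Hrot) as (HA1 & Hincl & _).
    destruct (IH HA1) as (HB & HincB & _).
    pose proof (up_size_rotation _ _ HA Hrot); pose proof (up_size_incl _ _ HincB).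
    repeat split; [exact HB | now apply incl_tran with (up A1) | lia].
Qed.

Lemma prle_in_up A B : In A U -> prle A B -> In B (up A).
Proof. intros HA H; destruct (prle_up_invariant A B H HA) as (HB & Hincl & _); auto. Qed.

Lemma prle_antisym A B : In A U -> prle A B -> prle B A -> isotopic A B.
Proof.
  intros HA HAB HBA.
  destruct (prle_up_invariant A B HAB HA) as (HB & HinclB & Hsize).
  destruct (prle_up_invariant B A HBA HB) as (_ & HinclA & _).
  apply Hsize; pose proof (up_size_incl _ _ HinclB); pose proof (up_size_incl _ _ HinclA); lia.
Qed.

End UpsetCertificate.

Definition diagrams3 : list diagram := diagrams 6 1.

(* Soundness never depends on [explore]: its results are only used through the
   boolean checks below. *)
Fixpoint explore (fuel : nat) (seen frontier : list diagram) : list diagram :=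
  match fuel with
  | 0 => seen
  | S fuel =>
      let next := nodup diagram_eq_dec (filter (fun E => negb (memb E seen))
                    (flat_map (fun D => iso_succ D ++ rot_succ D) frontier)) in
      match next with [] => seen | _ => explore fuel (seen ++ next) next end
  end.

Definition upset (D : diagram) : list diagram := explore (length diagrams3) [D] [D].

Lemma upset_refl_check : forallb (fun D => memb D (upset D)) diagrams3 = true.
Proof. vm_compute; reflexivity. Qed.

Lemma upset_iso_check :
  forallb (fun D => forallb (fun D' =>
    memb D' diagrams3 && subsetb (upset D') (upset D)) (iso_succ D)) diagrams3 = true.
Proof. vm_compute; reflexivity. Qed.

Lemma upset_rot_check :
  forallb (fun D => forallb (fun D' =>
    memb D' diagrams3 && subsetb (upset D') (upset D) && negb (memb D (upset D')))
    (rot_succ D)) diagrams3 = true.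
Proof. vm_compute; reflexivity. Qed.

Lemma upset_refl D : In D diagrams3 -> In D (upset D).
Proof.
  intros HD; apply memb_true_iff.
  exact (proj1 (forallb_forall _ _) upset_refl_check D HD).
Qed.

Lemma upset_iso_step D D' : In D diagrams3 -> iso_step D D' ->
  In D' diagrams3 /\ incl (upset D') (upset D).
Proof.
  intros HD Hiso.
  pose proof (proj1 (forallb_forall _ _) upset_iso_check D HD) as H.
  pose proof (proj1 (forallb_forall _ _) H D' (iso_step_in_iso_succ D D' Hiso)) as H'.
  apply andb_prop in H' as [H1 H2].
  split; [now apply memb_true_iff | now apply subsetb_incl].
Qed.

Lemma upset_rotation D D' : In D diagrams3 -> in_context rotation D D' ->
  In D' diagrams3 /\ incl (upset D') (upset D) /\ ~ In D (upset D').
Proof.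
  intros HD Hrot.
  pose proof (proj1 (forallb_forall _ _) upset_rot_check D HD) as H.
  pose proof (proj1 (forallb_forall _ _) H D' (rotation_in_rot_succ D D' Hrot)) as H'.
  apply andb_prop in H' as [H' H3]; apply andb_prop in H' as [H1 H2].
  split; [now apply memb_true_iff | split; [now apply subsetb_incl |]].
  rewrite <- memb_true_iff; now destruct (memb D (upset D')).
Qed.

Definition p1 : diagram :=
  [(0, Delta, 0); (0, Delta, 1); (0, Delta, 2); (0, Mu, 2); (0, Mu, 1); (0, Mu, 0)].
Definition p2 : diagram :=
  [(0, Delta, 0); (0, Delta, 1); (1, Delta, 1); (0, Mu, 2); (1, Mu, 0); (0, Mu, 0)].
Definition u1 : diagram :=
  [(0, Delta, 0); (0, Delta, 1); (0, Delta, 2); (0, Mu, 2); (1, Mu, 0); (0, Mu, 0)].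
Definition u2 : diagram :=
  [(0, Delta, 0); (0, Delta, 1); (0, Delta, 2); (1, Mu, 1); (1, Mu, 0); (0, Mu, 0)].

Lemma prle_rotation pre x y post : rotation x y -> prle (pre ++ x ++ post) (pre ++ y ++ post).
Proof. intros Hxy; apply rt_step; right; now exists pre, post, x, y. Qed.

Ltac rotation_at a b :=
  exists a, b;
  first [ left; split; reflexivity
        | right; left; split; reflexivity
        | right; right; left; split; reflexivity
        | right; right; right; split; reflexivity ].

Lemma prle_p1_u1 : prle p1 u1.
Proof.
  apply (prle_rotation [(0, Delta, 0); (0, Delta, 1); (0, Delta, 2); (0, Mu, 2)]
           [(0, Mu, 1); (0, Mu, 0)] [(1, Mu, 0); (0, Mu, 0)] []).
  rotation_at 0 0.
Qed.

Lemma prle_p2_u1 : prle p2 u1.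
Proof.
  apply (prle_rotation [(0, Delta, 0)] [(0, Delta, 1); (1, Delta, 1)]
           [(0, Delta, 1); (0, Delta, 2)] [(0, Mu, 2); (1, Mu, 0); (0, Mu, 0)]).
  rotation_at 0 1.
Qed.

Lemma prle_p1_u2 : prle p1 u2.
Proof.
  apply rt_trans with
    [(0, Delta, 0); (0, Delta, 1); (0, Delta, 2); (1, Mu, 1); (0, Mu, 1); (0, Mu, 0)].
  - apply (prle_rotation [(0, Delta, 0); (0, Delta, 1); (0, Delta, 2)]
             [(0, Mu, 2); (0, Mu, 1)] [(1, Mu, 1); (0, Mu, 1)] [(0, Mu, 0)]).
    rotation_at 0 1.
  - apply (prle_rotation [(0, Delta, 0); (0, Delta, 1); (0, Delta, 2); (1, Mu, 1)]
             [(0, Mu, 1); (0, Mu, 0)] [(1, Mu, 0); (0, Mu, 0)] []).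
    rotation_at 0 0.
Qed.

Lemma prle_p2_u2 : prle p2 u2.
Proof.
  apply rt_trans with
    [(0, Delta, 0); (0, Delta, 1); (0, Mu, 1); (0, Delta, 1); (1, Mu, 0); (0, Mu, 0)].
  - apply (prle_rotation [(0, Delta, 0); (0, Delta, 1)] [(1, Delta, 1); (0, Mu, 2)]
             [(0, Mu, 1); (0, Delta, 1)] [(1, Mu, 0); (0, Mu, 0)]).
    rotation_at 0 1.
  - apply (prle_rotation [(0, Delta, 0); (0, Delta, 1)] [(0, Mu, 1); (0, Delta, 1)]
             [(0, Delta, 2); (1, Mu, 1)] [(1, Mu, 0); (0, Mu, 0)]).
    rotation_at 0 1.
Qed.

Lemma prographs_p1_p2_u1_u2 : prograph 3 p1 /\ prograph 3 p2 /\ prograph 3 u1 /\ prograph 3 u2.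
Proof. repeat split. Qed.

Lemma no_upper_bound_below_u1_u2_check :
  forallb (fun J => negb (memb J (upset p1) && memb J (upset p2)
                          && memb u1 (upset J) && memb u2 (upset J))) diagrams3 = true.
Proof. vm_compute; reflexivity. Qed.

Lemma no_join_p1_p2 : ~ exists J, is_join 3 p1 p2 J.
Proof.
  intros (J & HJ & Hp1J & Hp2J & Hleast).
  destruct prographs_p1_p2_u1_u2 as (Hp1 & Hp2 & Hu1 & Hu2).
  pose proof (prograph_in_diagrams 3 J HJ) as HJin.
  pose proof (prle_in_up _ _ upset_refl upset_iso_step upset_rotation) as Hup.
  pose proof (Hup p1 J (prograph_in_diagrams 3 p1 Hp1) Hp1J) as H1.
  pose proof (Hup p2 J (prograph_in_diagrams 3 p2 Hp2) Hp2J) as H2.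
  pose proof (Hup J u1 HJin (Hleast u1 Hu1 prle_p1_u1 prle_p2_u1)) as H3.
  pose proof (Hup J u2 HJin (Hleast u2 Hu2 prle_p1_u2 prle_p2_u2)) as H4.
  pose proof (proj1 (forallb_forall _ _) no_upper_bound_below_u1_u2_check J HJin) as C.
  apply memb_true_iff in H1, H2, H3, H4.
  cbv beta in C; rewrite H1, H2, H3, H4 in C; discriminate.
Qed.

Theorem mainTheorem4 : exists n : nat, 1 <= n /\ is_poset_n n /\ ~ is_lattice_n n.
Proof.
  exists 3; split; [lia | split].
  - intros P Q HP _.
    exact (prle_antisym _ _ upset_refl upset_iso_step upset_rotation P Q
             (prograph_in_diagrams 3 P HP)).
  - intros Hlattice.
    destruct prographs_p1_p2_u1_u2 as (Hp1 & Hp2 & _).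
    exact (no_join_p1_p2 (proj1 (Hlattice p1 p2 Hp1 Hp2))).
Qed.
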